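(* Let $\mathcal{R}=\mathbb{C}[\xi_0,\xi_1,\xi_2,\xi_3]$. The sequence of $\mathcal{R}$-modules $\mathcal{R}^3\xleftarrow{D_0(\xi)^t}\mathcal{R}^4\xleftarrow{D_1(\xi)^t}\mathcal{R}^1$ is exact, i.e. $\ker D_0(\xi)^t=\operatorname{Im}D_1(\xi)^t$ in $\mathcal{R}^4$.
   Context: The polynomial matrices are $D_0(\xi)^t=\frac1i\begin{pmatrix}-(\xi_2+i\xi_3)&\xi_0-i\xi_1&0&0\\-(\xi_0+i\xi_1)&-(\xi_2-i\xi_3)&-(\xi_2+i\xi_3)&\xi_0-i\xi_1\\0&0&-(\xi_0+i\xi_1)&-(\xi_2-i\xi_3)\end{pmatrix}$, $D_1(\xi)^t=\frac1i\begin{pmatrix}-\xi_0+i\xi_1\\-\xi_2-i\xi_3\\\xi_2-i\xi_3\\-\xi_0-i\xi_1\end{pmatrix}$, acting on column vectors of polynomials by matrix multiplication (these are the transposed symbols of the 2-Cauchy–Fueter operators, $\partial_{x_j}\mapsto\frac1i\xi_j$). *)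

From mathcomp Require Import all_boot all_algebra.
From mathcomp Require Import reals complex.
From mathcomp Require Import mpoly.
Set Implicit Arguments. Unset Strict Implicit. Unset Printing Implicit Defensive.
Import GRing.Theory Num.Theory.
Local Open Scope ring_scope.

Notation Rpoly R := {mpoly (R[i])[4]}.

Definition xi (R : realType) (j : nat) : Rpoly R := 'X_(inord j).

Definition iP (R : realType) : Rpoly R := ('i : R[i])%:MP.

Definition invI (R : realType) : Rpoly R := (('i : R[i])^-1)%:MP.

Definition D0t_entry (R : realType) (r c : nat) : Rpoly R :=
  let x0 := xi R 0 in let x1 := xi R 1 in
  let x2 := xi R 2 in let x3 := xi R 3 in
  let I := iP R in
  match r, c with
  | 0, 0 => - (x2 + I * x3)
  | 0, 1 => x0 - I * x1
  | 1, 0 => - (x0 + I * x1)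
  | 1, 1 => - (x2 - I * x3)
  | 1, 2 => - (x2 + I * x3)
  | 1, 3 => x0 - I * x1
  | 2, 2 => - (x0 + I * x1)
  | 2, 3 => - (x2 - I * x3)
  | _, _ => 0
  end.

Definition D0t (R : realType) : 'M[Rpoly R]_(3, 4) :=
  \matrix_(r < 3, c < 4) (invI R * D0t_entry R r c).

Definition D1t_entry (R : realType) (r : nat) : Rpoly R :=
  let x0 := xi R 0 in let x1 := xi R 1 in
  let x2 := xi R 2 in let x3 := xi R 3 in
  let I := iP R in
  match r with
  | 0 => - x0 + I * x1
  | 1 => - x2 - I * x3
  | 2 => x2 - I * x3
  | 3 => - x0 - I * x1
  | _ => 0
  end.

Definition D1t (R : realType) : 'M[Rpoly R]_(4, 1) :=
  \matrix_(r < 4, c < 1) (invI R * D1t_entry R r).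

(* Put a = xi0 + i xi1, a' = xi0 - i xi1, b = xi2 + i xi3, b' = xi2 - i xi3.
   Up to the unit 1/i, D_0^t has rows (-b, a', 0, 0), (-a, -b', -b, a'),
   (0, 0, -a, -b') and D_1^t is (a', b, -b', a) up to the unit -1/i.  A linear
   change of variables turns a', b (resp. a, b') into two distinct variables,
   so b is a non-zero-divisor modulo a' and b' one modulo a.  Hence a kernel
   vector has v0 = a' w, v1 = b w, v3 = a u, v2 = -b' u, and the middle row
   gives (a a' + b b') (u - w) = 0, so u = w. *)

From mathcomp Require Import all_boot all_algebra.
From mathcomp Require Import reals complex.
From mathcomp Require Import mpoly.
From mathcomp Require Import ring.
Set Implicit Arguments. Unset Strict Implicit. Unset Printing Implicit Defensive.
Import GRing.Theory Num.Theory.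
Local Open Scope ring_scope.

Definition regular_mod {A : comPzRingType} (x y : A) :=
  forall p q, x * p = y * q -> exists r, q = x * r.

Lemma regular_mod_rmorph (A B : comPzRingType) (f : {rmorphism A -> B})
    (g : {rmorphism B -> A}) : cancel f g ->
  forall x y, regular_mod (f x) (f y) -> regular_mod x y.
Proof.
move=> fK x y fxy p q xpyq.
have [r /(congr1 g)] : exists r, f q = f x * r.
  by apply: (fxy (f p)); rewrite -!rmorphM xpyq.
by rewrite fK rmorphM fK => ->; exists (g r).
Qed.

Lemma regular_modX (K : comNzRingType) n (j k : 'I_n) :
  j != k -> regular_mod ('X_j : {mpoly K[n]}) 'X_k.
Proof.
move=> njk p q E.
have qj m : m \in msupp q -> (0 < m j)%N.
  rewrite mcoeff_msupp; apply: contraR; rewrite -eqn0Ngt => /eqP mj0.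
  have := mcoeffMX q U_(k) m; rewrite mulrC -E mulrC => <-.
  rewrite mcoeff_eq0 (perm_mem (msuppMX _ _)); apply/mapP => -[m' _ /mnmP/(_ j)].
  rewrite !mnmDE !mnm1E eqxx mj0 eq_sym (negbTE njk) addn0 => /eqP.
  by rewrite add1n.
exists (\sum_(m <- msupp q) q@_m *: 'X_[m - U_(j)]).
rewrite big_distrr /= [LHS]mpolyE !big_seq; apply: eq_bigr => m /qj mj.
rewrite -scalerAr -mpolyXD addmC submK //; apply/mnm_lepP => i.
by rewrite mnm1E; case: eqP => [<-|].
Qed.

Lemma comp_mpolyA (K : comNzRingType) n k l (p : {mpoly K[n]})
    (lq : n.-tuple {mpoly K[k]}) (lr : k.-tuple {mpoly K[l]}) :
  (p \mPo lq) \mPo lr = p \mPo [tuple tnth lq i \mPo lr | i < n].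
Proof.
rewrite [p \mPo lq]comp_mpolyEX [RHS]comp_mpolyEX raddf_sum.
apply: eq_bigr => m _ /=; rewrite comp_mpolyZ !comp_mpolyX rmorph_prod.
congr (_ *: _); apply: eq_bigr => i _ /=.
by rewrite rmorphXn tnth_mktuple.
Qed.

Lemma comp_mpolyK (K : comNzRingType) n (lq lr : n.-tuple {mpoly K[n]}) :
  (forall i, tnth lq i \mPo lr = 'X_i) -> cancel (comp_mpoly lq) (comp_mpoly lr).
Proof.
move=> lqK p; rewrite comp_mpolyA -[RHS]comp_mpoly_id; congr (p \mPo _).
by apply: eq_from_tnth => i; rewrite !tnth_mktuple lqK.
Qed.

Lemma mpoly_neq0_meval (K : comNzRingType) n (v : 'I_n -> K) (p : {mpoly K[n]}) :
  p.@[v] != 0 -> p != 0.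
Proof. by apply: contra_neq => ->; rewrite meval0. Qed.

Section Shear.
Variable K : comNzRingType.
Local Notation X j := ('X_(inord j) : {mpoly K[4]}).

Definition shear (c : K) : 4.-tuple {mpoly K[4]} :=
  [tuple X 0 + c%:MP * X 1; X 1; X 2 - c%:MP * X 3; X 3].

Lemma comp_shearX c j : (j < 4)%N -> X j \mPo shear c = (shear c)`_j.
Proof. by move=> lt_j4; rewrite comp_mpolyXU inordK. Qed.

Lemma shearK c : cancel (comp_mpoly (shear c)) (comp_mpoly (shear (- c))).
Proof.
apply: comp_mpolyK => i; rewrite (tnth_nth 0) -[in RHS](inord_val i).
case: i => [[|[|[|[|//]]]] lt_i4] /=;
  rewrite ?comp_mpolyD ?comp_mpolyN ?rmorphM /= ?comp_mpolyC !comp_shearX //=;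
  by rewrite rmorphN mulNr; ring.
Qed.

Lemma regular_mod_shear c : regular_mod (X 0 - c%:MP * X 1) (X 2 + c%:MP * X 3).
Proof.
apply: (regular_mod_rmorph (shearK c)).
rewrite rmorphB rmorphD !rmorphM /= !comp_mpolyC !comp_shearX //=.
rewrite addrK subrK; apply: regular_modX.
by rewrite -(inj_eq val_inj) /= !inordK.
Qed.

End Shear.

Section CFMatrices.
Variable A : comPzRingType.
Variables a a' b b' : A.

Definition cf0 : 'M[A]_(3, 4) := \matrix_(r < 3, c < 4)
  match val r, val c with
  | 0, 0 => - b | 0, 1 => a'
  | 1, 0 => - a | 1, 1 => - b' | 1, 2 => - b | 1, 3 => a'
  | 2, 2 => - a | 2, 3 => - b'
  | _, _ => 0
  end.

Definition cf1 : 'cV[A]_4 := \col_(r < 4)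
  match val r with 0 => a' | 1 => b | 2 => - b' | _ => a end.

Lemma cf_complex : cf0 *m cf1 = 0.
Proof.
apply/matrixP => r c; rewrite !mxE !big_ord_recl big_ord0 !mxE /=.
by case: r => [[|[|[|//]]] ?] /=; ring.
Qed.

End CFMatrices.

Section CFExact.
Variable A : idomainType.
Variables a a' b b' : A.
Hypotheses (reg_a'b : regular_mod a' b) (reg_ab' : regular_mod a b').
Hypotheses (a_neq0 : a != 0) (a'_neq0 : a' != 0) (nondeg : a * a' + b * b' != 0).

Lemma cf_kernel_entries v0 v1 v2 v3 :
    - b * v0 + a' * v1 = 0 ->
    - a * v0 + (- b' * v1 + (- b * v2 + a' * v3)) = 0 ->
    - a * v2 + - b' * v3 = 0 ->
  exists w, [/\ v0 = a' * w, v1 = b * w, v2 = - b' * w & v3 = a * w].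
Proof.
move=> e0 e1 e2.
have e0' : a' * v1 = b * v0 by apply: subr0_eq; rewrite -e0; ring.
have [w v0E] := reg_a'b e0'.
have v1E : v1 = b * w by apply: (mulfI a'_neq0); rewrite e0' v0E mulrCA.
have e2' : a * - v2 = b' * v3 by apply: subr0_eq; rewrite -e2; ring.
have [u v3E] := reg_ab' e2'.
have v2E : v2 = - b' * u.
  by apply: (mulfI a_neq0); rewrite -[v2]opprK mulrN e2' v3E; ring.
have uw : u = w.
  by apply/subr0_eq/(mulfI nondeg); rewrite mulr0 -e1 v0E v1E v2E v3E; ring.
by exists w; rewrite v2E v3E uw; split.
Qed.

Lemma cf_exact (v : 'cV[A]_4) :
  cf0 a a' b b' *m v = 0 -> exists w, v = w *: cf1 a a' b b'.
Proof.
move=> /matrixP E.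
have := E 0 0; have := E 1 0; have := E 2 0.
rewrite !mxE !big_ord_recl !big_ord0 !mxE /= !(mul0r, add0r, addr0) => e2 e1 e0.
have [w [v0E v1E v2E v3E]] := cf_kernel_entries e0 e1 e2.
exists w; apply/matrixP => r c; rewrite ord1 !mxE mulrC.
by case: r => [[|[|[|[|//]]]] ?] /=;
  rewrite -?v0E -?v1E -?v2E -?v3E; congr (v _ 0); apply: val_inj.
Qed.

End CFExact.

Section CauchyFueter.
Variable R : realType.
Local Notation a := (xi R 0 + iP R * xi R 1).
Local Notation a' := (xi R 0 - iP R * xi R 1).
Local Notation b := (xi R 2 + iP R * xi R 3).
Local Notation b' := (xi R 2 - iP R * xi R 3).

Lemma D0t_cf : D0t R = invI R *: cf0 a a' b b'.
Proof.
apply/matrixP => r c; rewrite !mxE.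
by case: r => [[|[|[|//]]] ?]; case: c => [[|[|[|[|//]]]] ?].
Qed.

Lemma D1t_cf : D1t R = - invI R *: cf1 a a' b b'.
Proof. by apply/matrixP => r c; rewrite !mxE; case: r => [[|[|[|[|//]]]] ?] /=; ring. Qed.

Lemma iP_invI : iP R * invI R = 1.
Proof. by rewrite -rmorphM /= mulfV ?neq0Ci. Qed.

Lemma regular_mod_a'b : regular_mod a' b.
Proof. exact: regular_mod_shear. Qed.

Lemma regular_mod_ab' : regular_mod a b'.
Proof. by have := @regular_mod_shear _ (- ('i : R[i])); rewrite mpolyCN !mulNr opprK. Qed.

(* Evaluation at (1, 0, 0, 0), where a, a' and a a' + b b' all equal 1. *)
Let e0 (j : 'I_4) : R[i] := (j == 0 :> nat)%:R.

Lemma meval_xi j : (j < 4)%N -> (xi R j).@[e0] = (j == 0%N)%:R.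
Proof. by move=> lt_j4; rewrite mevalXU /e0 inordK. Qed.

Lemma cf_nondegenerate : [/\ a != 0, a' != 0 & a * a' + b * b' != 0].
Proof.
split; apply: (@mpoly_neq0_meval _ _ e0);
  rewrite !(mevalD, mevalN, mevalM, mevalC) !meval_xi //= mulr0;
  by rewrite ?(oppr0, addr0, mul0r, mulr1) pnatr_eq0.
Qed.

Lemma D0t_kernel (v : 'cV[Rpoly R]_4) :
  D0t R *m v = 0 <-> cf0 a a' b b' *m v = 0.
Proof.
rewrite D0t_cf -scalemxAl; split=> [kerv | ->]; last by rewrite scaler0.
by rewrite -[LHS]scale1r -iP_invI -scalerA kerv scaler0.
Qed.

Lemma D1t_image (w : Rpoly R) :
  w *: cf1 a a' b b' = D1t R *m const_mx (- iP R * w).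
Proof.
apply/matrixP => r c; rewrite D1t_cf !mxE big_ord1 !mxE.
by rewrite -[LHS]mul1r -iP_invI; ring.
Qed.

End CauchyFueter.

Theorem proposition3p3 (R : realType) (v : 'cV[Rpoly R]_4) :
  D0t R *m v = 0 <-> exists w : 'cV[Rpoly R]_1, v = D1t R *m w.
Proof.
have [a_neq0 a'_neq0 nondeg] := cf_nondegenerate R.
have kerP :=
  cf_exact (@regular_mod_a'b R) (@regular_mod_ab' R) a_neq0 a'_neq0 nondeg.
rewrite D0t_kernel; split=> [/kerP[w ->] | [w ->]].
  by exists (const_mx (- iP R * w)); rewrite D1t_image.
by rewrite D1t_cf mulmxA -scalemxAr cf_complex scaler0 mul0mx.
Qed.
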